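(* If a fixed point of the function $\mathbf{h}$ exists, it is unique.
   Context: Let $\mathbf{A}\in\mathbb{R}^{n\times n}$ be partitioned into square $b\times b$ blocks, and $S_B$ a set of block indices containing all diagonal blocks. The unknowns (entries of the block ILU factors $\mathbf{L}_{ij}$, $i>j$, and $\mathbf{U}_{ij}$, $i\le j$, for $(i,j)\in S_B$) form $\mathbf{x}\in\mathbb{R}^m$, $m=|S_B|b^2$, with $\mathbf{X}_{ij}$ the $b\times b$ block for index $(i,j)$. The map $\mathbf{h}:D_B\to\mathbb{R}^m$ is given blockwise by $\mathbf{H}_{ij}(\mathbf{x})=(\mathbf{A}_{ij}-\sum_{k=1}^{j-1}\mathbf{X}_{ik}\mathbf{X}_{kj})\mathbf{X}_{jj}^{-1}$ for $i>j$ and $\mathbf{H}_{ij}(\mathbf{x})=\mathbf{A}_{ij}-\sum_{k=1}^{i-1}\mathbf{X}_{ik}\mathbf{X}_{kj}$ for $i\le j$, on $D_B:=\{\mathbf{x}: \mathbf{X}_{jj}\text{ nonsingular for all diagonal blocks}\}$. *)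

From HB Require Import structures.
From mathcomp Require Import all_boot all_order all_algebra.
From mathcomp Require Import reals.
Set Implicit Arguments. Unset Strict Implicit. Unset Printing Implicit Defensive.
Import Order.TTheory GRing.Theory Num.Theory.
Local Open Scope ring_scope.

(* Blocks are indexed 0..N-1 (paper: 1..N); each block is b x b; n = N*b.
   Row r of block i is global row i*b + r (mxvec_index i r). *)
Definition blk (R : realType) (N b : nat) (A : 'M[R]_(N * b)) (i j : 'I_N)
  : 'M[R]_b :=
  \matrix_(r < b, c < b) A (mxvec_index i r) (mxvec_index j c).

(* The unknown vector x is represented blockwise by X : 'I_N -> 'I_N -> 'M_b;
   only the blocks X i j with (i,j) \in S carry unknowns.  Entries outside the
   pattern S are not unknowns (they are the zero entries of the ILU factors),
   hence the sums only range over k with (i,k) and (k,j) in S. *)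
Definition Hmap (R : realType) (N b : nat) (S : {set 'I_N * 'I_N})
  (A : 'M[R]_(N * b)) (X : 'I_N -> 'I_N -> 'M[R]_b) (i j : 'I_N) : 'M[R]_b :=
  if (j < i)%N then
    (blk A i j - \sum_(k < N | [&& (k < j)%N, (i, k) \in S & (k, j) \in S])
                   X i k *m X k j) *m invmx (X j j)
  else
    blk A i j - \sum_(k < N | [&& (k < i)%N, (i, k) \in S & (k, j) \in S])
                  X i k *m X k j.

Definition in_DB (R : realType) (N b : nat) (X : 'I_N -> 'I_N -> 'M[R]_b) :=
  forall j : 'I_N, X j j \in unitmx.

Definition is_fixed_point (R : realType) (N b : nat) (S : {set 'I_N * 'I_N})
  (A : 'M[R]_(N * b)) (X : 'I_N -> 'I_N -> 'M[R]_b) :=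
  forall i j : 'I_N, (i, j) \in S -> X i j = Hmap S A X i j.

From HB Require Import structures.
From mathcomp Require Import all_boot all_order all_algebra.
From mathcomp Require Import reals.
From mathcomp Require Import zify.
Local Open Scope ring_scope.

(* Order the blocks by [ilu_rank i j = 2 min(i,j) + [j < i]], the order in
   which a block ILU sweep computes them ([U_jj] before [L_ij]). Each block
   [H_ij(x)] only reads unknowns of strictly smaller rank, so a fixed point is
   determined block by block by induction on the rank. *)

Definition ilu_rank {N : nat} (i j : 'I_N) : nat := 2 * minn i j + (j < i).

Lemma ilu_rank_ltl (N : nat) (i j k : 'I_N) :
  (k < minn i j)%N -> (ilu_rank i k < ilu_rank i j)%N.
Proof. rewrite /ilu_rank; lia. Qed.

Lemma ilu_rank_ltr (N : nat) (i j k : 'I_N) :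
  (k < minn i j)%N -> (ilu_rank k j < ilu_rank i j)%N.
Proof. rewrite /ilu_rank; lia. Qed.

Lemma ilu_rank_diag_lt (N : nat) (i j : 'I_N) :
  (j < i)%N -> (ilu_rank j j < ilu_rank i j)%N.
Proof. rewrite /ilu_rank; lia. Qed.

Section HmapLowerRank.

Variables (R : realType) (N b : nat) (A : 'M[R]_(N * b)).
Variables (S : {set 'I_N * 'I_N}) (X Y : 'I_N -> 'I_N -> 'M[R]_b).
Hypothesis diag_in_S : forall i : 'I_N, (i, i) \in S.

Lemma Hmap_eq_lower_rank (i j : 'I_N) :
  (forall k l : 'I_N, (k, l) \in S ->
     (ilu_rank k l < ilu_rank i j)%N -> X k l = Y k l) ->
  Hmap S A X i j = Hmap S A Y i j.
Proof.
move=> eqXY_lt; rewrite /Hmap.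
have eq_prod (k : 'I_N) : (k < minn i j)%N -> (i, k) \in S -> (k, j) \in S ->
    X i k *m X k j = Y i k *m Y k j.
  by move=> lt_k Sik Skj; rewrite !eqXY_lt ?ilu_rank_ltl ?ilu_rank_ltr.
case: ltnP => [lt_ji | le_ij].
- rewrite eqXY_lt ?ilu_rank_diag_lt //; congr ((_ - _) *m _).
  by apply: eq_bigr => k /and3P [lt_kj Sik Skj]; apply: eq_prod => //; lia.
- congr (_ - _).
  by apply: eq_bigr => k /and3P [lt_ki Sik Skj]; apply: eq_prod => //; lia.
Qed.

End HmapLowerRank.

Theorem theorem7 (R : realType) (N b : nat) (A : 'M[R]_(N * b))
  (S : {set 'I_N * 'I_N}) (hS : forall i : 'I_N, (i, i) \in S)
  (X Y : 'I_N -> 'I_N -> 'M[R]_b) :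
  in_DB X -> in_DB Y -> is_fixed_point S A X -> is_fixed_point S A Y ->
  forall i j : 'I_N, (i, j) \in S -> X i j = Y i j.
Proof.
move=> _ _ fixX fixY i j.
have [n] := ubnP (ilu_rank i j); elim: n i j => // n IH i j lt_rank Sij.
rewrite fixX // fixY //; apply: Hmap_eq_lower_rank => // k l Skl lt_kl.
exact: IH (leq_trans lt_kl _) Skl.
Qed.
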